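(* Let $(\{U_\alpha\},\{W_\beta\})$ be a solution of the combined $(\mathrm{sl}_n(\mathbb{C}),\mathfrak{t})$-hierarchy, and set $B_{m\alpha}:=\pi_{\geqslant0}(U_\alpha z^m)$ for $m\ge0$ and $C_{m\beta}:=\pi_{<0}(W_\beta z^{m+1})$ for $m<0$. Then for all $\alpha_1,\alpha_2,\beta_1,\beta_2\in\{1,\dots,r\}$: $$\partial_{m_1\beta_1}(B_{m_2\alpha_2})-\partial_{m_2\alpha_2}(C_{m_1\beta_1})-[C_{m_1\beta_1},B_{m_2\alpha_2}]=0\quad (m_1<0,\ m_2\ge0),$$ $$\partial_{m_1\alpha_1}(B_{m_2\alpha_2})-\partial_{m_2\alpha_2}(B_{m_1\alpha_1})-[B_{m_1\alpha_1},B_{m_2\alpha_2}]=0\quad (m_1,m_2\ge0),$$ $$\partial_{m_1\beta_1}(C_{m_2\beta_2})-\partial_{m_2\beta_2}(C_{m_1\beta_1})-[C_{m_1\beta_1},C_{m_2\beta_2}]=0\quad (m_1,m_2<0).$$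
   Context: $R$ is a commutative $\mathbb{C}$-algebra with commuting $\mathbb{C}$-linear derivations $\partial_{m\alpha}$, $m\in\mathbb{Z}$, $1\le\alpha\le r$, acting coefficientwise on matrices and on series. $\mathrm{gl}_n(R)[z,z^{-1})$ consists of formal series $\sum_{i=-\infty}^{N}X_iz^i$ and $\mathrm{gl}_n(R)[z^{-1},z)$ of formal series $\sum_{i=-N}^{\infty}X_iz^i$ ($X_i\in\mathrm{gl}_n(R)$), both with bracket $[X,Y]=\sum[X_i,Y_j]z^{i+j}$; $\mathrm{sl}_n$ versions have traceless coefficients. $\pi_{\geqslant0}$ (resp. $\pi_{<0}$) keeps the terms with $i\ge0$ (resp. $i<0$). $\mathfrak{t}\subset\mathrm{sl}_n(\mathbb{C})$ is commutative of maximal dimension $r$, basis $E_1,\dots,E_r$. $G_{<0}=\{\mathrm{Id}+\sum_{i\ge1}Y_iz^{-i}\mid Y_i\in\mathrm{gl}_n(R)\}$; $G_{\geqslant0}=\{X_0+\sum_{i\ge1}X_iz^i\mid X_i\in\mathrm{gl}_n(R),\ X_0\text{ invertible}\}$. A deformation $(\{U_\alpha\},\{W_\beta\})$ means $U_\alpha=gE_\alpha g^{-1}$ ($1\le\alpha\le r$) for some $g\in G_{<0}$ and $W_\beta=XE_\beta z^{-1}X^{-1}$ ($1\le\beta\le r$) for some $X\in G_{\geqslant0}$. It is a solution of the combined $(\mathrm{sl}_n(\mathbb{C}),\mathfrak{t})$-hierarchy if: for all $m\ge0$ and all $\alpha_1,\alpha_2,\beta$: $\partial_{m\alpha_1}(U_{\alpha_2})=[\pi_{\geqslant0}(U_{\alpha_1}z^m),U_{\alpha_2}]$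 and $\partial_{m\alpha_1}(W_\beta)=[\pi_{\geqslant0}(U_{\alpha_1}z^m),W_\beta]$; and for all $m<0$ and all $\beta_1,\beta_2,\alpha$: $\partial_{m\beta_1}(W_{\beta_2})=[\pi_{<0}(W_{\beta_1}z^{m+1}),W_{\beta_2}]$ and $\partial_{m\beta_1}(U_\alpha)=[\pi_{<0}(W_{\beta_1}z^{m+1}),U_\alpha]$. (Here $\pi_{\geqslant0}(U z^m)$ is a polynomial in $z$ and $\pi_{<0}(Wz^{m+1})$ a polynomial in $z^{-1}$, so all brackets are well defined.) *)

From HB Require Import structures.
From mathcomp Require Import all_boot all_order all_algebra.
Set Implicit Arguments. Unset Strict Implicit. Unset Printing Implicit Defensive.
Import Order.TTheory GRing.Theory Num.Theory.
Local Open Scope ring_scope.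

Section Defs.
(* C plays the role of the complex numbers (any numeric algebraically closed
   field, e.g. C itself); R is a commutative C-algebra. *)
Variables (C : numClosedFieldType) (R : comAlgType C) (n : nat).

(* Formal Laurent series with coefficients in gl_n(R): z^k-coefficient at k. *)
Definition lser := int -> 'M[R]_n.

(* Formal power series (nat-indexed); used for elements of G_{<0}
   (coefficient of z^{-k}) and of G_{>=0} (coefficient of z^k). *)
Definition pser := nat -> 'M[R]_n.

Definition pmul (f g : pser) : pser :=
  fun k => \sum_(i < k.+1) f i *m g (k - i)%N.

Definition pconst (A : 'M[R]_n) : pser := fun k => if k == 0%N then A else 0.
Definition pone : pser := pconst 1%:M.

(* the series sum_k f_k z^{-k} viewed as a Laurent series *)
Definition negser (f : pser) : lser := fun k => if k <= 0 then f (absz k) else 0.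
(* the series z^{-1} * sum_k h_k z^k viewed as a Laurent series *)
Definition zinvser (h : pser) : lser :=
  fun k => if -1 <= k then h (absz (k + 1)) else 0.

Definition zshift (m : int) (f : lser) : lser := fun k => f (k - m).
Definition pi_ge0 (f : lser) : lser := fun k => if 0 <= k then f k else 0.
Definition pi_lt0 (f : lser) : lser := fun k => if k < 0 then f k else 0.

(* Product P*Y and Y*P of a Laurent polynomial P whose support lies in the
   integer window [a, b] with an arbitrary formal series Y: each coefficient
   is the finite sum over the support of P (this is the usual product of
   series; it does not depend on the window as long as it contains supp P). *)
Definition lmulP (a b : int) (P Y : lser) : lser :=
  fun k => \sum_(j < (absz (b - a)).+1) P (a + j%:Z) *m Y (k - (a + j%:Z)).
Definition rmulP (a b : int) (P Y : lser) : lser :=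
  fun k => \sum_(j < (absz (b - a)).+1) Y (k - (a + j%:Z)) *m P (a + j%:Z).
Definition lbr (a b : int) (P Y : lser) : lser :=
  fun k => lmulP a b P Y k - rmulP a b P Y k.

Definition dser (d : R -> R) (f : lser) : lser := fun k => map_mx d (f k).

Definition embC (A : 'M[C]_n) : 'M[R]_n := map_mx (fun c : C => c%:A) A.

Definition Bop (U : lser) (m : int) : lser := pi_ge0 (zshift m U).
Definition Cop (W : lser) (m : int) : lser := pi_lt0 (zshift (m + 1) W).

End Defs.

Definition is_derivation (C : numClosedFieldType) (R : comAlgType C)
    (d : R -> R) : Prop :=
  [/\ forall x y, d (x + y) = d x + d y,
      forall (c : C) x, d (c *: x) = c *: d x
    & forall x y, d (x * y) = d x * y + x * d y].

Definition derivation_family (C : numClosedFieldType) (R : comAlgType C) (r : nat)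
    (D : int -> 'I_r -> R -> R) : Prop :=
  (forall m a, is_derivation (D m a)) /\
  (forall m a m' a' x, D m a (D m' a' x) = D m' a' (D m a x)).

(* E_1..E_r is a basis of a commutative subalgebra t of sl_n(C) of maximal
   dimension r among commutative subalgebras of sl_n(C). *)
Definition is_t_basis (C : numClosedFieldType) (n r : nat) (E : 'I_r -> 'M[C]_n)
    : Prop :=
  [/\ forall a, \tr (E a) = 0,
      forall a b, E a *m E b = E b *m E a,
      row_free (\matrix_(i < r) mxvec (E i))
    & forall (s : nat) (F : 'I_s -> 'M[C]_n),
        (forall i, \tr (F i) = 0) ->
        (forall i j, F i *m F j = F j *m F i) ->
        row_free (\matrix_(i < s) mxvec (F i)) -> (s <= r)%N].

(* ({U_alpha},{W_beta}) is a deformation: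
   U_alpha = g E_alpha g^{-1}, g in G_{<0};
   W_beta = X E_beta z^{-1} X^{-1}, X in G_{>=0}. *)
Definition deformation (C : numClosedFieldType) (R : comAlgType C) (n r : nat)
    (E : 'I_r -> 'M[C]_n) (U W : 'I_r -> lser R n) : Prop :=
  (exists g ginv : pser R n,
     [/\ g 0%N = 1%:M, pmul g ginv = pone R n, pmul ginv g = pone R n
       & forall a, U a = negser (pmul (pmul g (pconst (embC R (E a)))) ginv)]) /\
  (exists X Xinv : pser R n,
     [/\ exists Y : 'M[R]_n, X 0%N *m Y = 1%:M /\ Y *m X 0%N = 1%:M,
         pmul X Xinv = pone R n, pmul Xinv X = pone R n
       & forall b, W b = zinvser (pmul (pmul X (pconst (embC R (E b)))) Xinv)]).

Definition combined_solution (C : numClosedFieldType) (R : comAlgType C)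
    (n r : nat) (D : int -> 'I_r -> R -> R) (U W : 'I_r -> lser R n) : Prop :=
  (forall (m : int) (a1 a2 b : 'I_r), 0 <= m ->
     dser (D m a1) (U a2) = lbr 0 m (Bop (U a1) m) (U a2) /\
     dser (D m a1) (W b) = lbr 0 m (Bop (U a1) m) (W b)) /\
  (forall (m : int) (b1 b2 a : 'I_r), m < 0 ->
     dser (D m b1) (W b2) = lbr m (-1) (Cop (W b1) m) (W b2) /\
     dser (D m b1) (U a) = lbr m (-1) (Cop (W b1) m) (U a)).

From HB Require Import structures.
From mathcomp Require Import all_boot all_order all_algebra.
From mathcomp Require Import zify.
From Stdlib Require Import FunctionalExtensionality.
Import Order.TTheory GRing.Theory Num.Theory.
Local Open Scope ring_scope.
Set Implicit Arguments. Unset Strict Implicit. Unset Printing Implicit Defensive.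

(* Everything is proved coefficientwise: the z^k-coefficient of a bracket [P, Y] with
   P a Laurent polynomial is a finite sum over a window of integers, and all the
   brackets occurring in one identity can be summed over a common window.
   Substituting the hierarchy equations, each identity reduces to a statement about
   the splitting X = pi_{>=0} X + pi_{<0} X: a product of two series supported in
   negative (resp. nonnegative) degrees has no nonnegative (resp. negative)
   coefficients. For two U's (or two W's) what remains is the coefficient of
   [z^m1 U_a1, z^m2 U_a2], which vanishes since U_a1 and U_a2 are conjugates of the
   commuting E_a1 and E_a2 by the same g. *)

Section WindowSum.
Variable V : zmodType.
Implicit Types (f g : int -> V) (a b c L H : int).

(* For [b < a] this is not the empty sum. *)
Definition winsum a b f : V := \sum_(i < (absz (b - a)%R).+1) f (a + i%:Z).

Definition vanishes_outside a b f := forall j, ~~ (a <= j <= b) -> f j = 0.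

Lemma eq_winsum a b f g : f =1 g -> winsum a b f = winsum a b g.
Proof. by move=> fg; apply: eq_bigr => i _; apply: fg. Qed.

Lemma winsum_eq0 a b f : (forall j, f j = 0) -> winsum a b f = 0.
Proof. by move=> f0; apply: big1 => i _; apply: f0. Qed.

Lemma winsumB a b f g : winsum a b f - winsum a b g = winsum a b (fun j => f j - g j).
Proof. by rewrite /winsum -sumrB. Qed.

Lemma winsumD a b f g : winsum a b f + winsum a b g = winsum a b (fun j => f j + g j).
Proof. by rewrite /winsum -big_split. Qed.

Lemma winsumN a b f : - winsum a b f = winsum a b (fun j => - f j).
Proof. by rewrite /winsum -sumrN. Qed.

Lemma winsum_widen L H a b f : a <= b -> L <= a -> b <= H ->
  vanishes_outside a b f -> winsum L H f = winsum a b f.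
Proof.
move=> ab La bH f0; rewrite /winsum.
set p := absz (a - L)%R; set N := (absz (b - a)%R).+1.
have -> : (absz (H - L)%R).+1 = (p + N + absz (H - b)%R)%N by rewrite /p /N; lia.
rewrite -(big_mkord xpredT (fun i => f (L + i%:Z))).
rewrite (big_cat_nat _ (leq_addr _ _)) //= (big_cat_nat _ (leq_addr _ _)) //=.
rewrite big1_seq ?add0r => [|i]; last first.
  by rewrite mem_iota => /andP[_ hi]; apply: f0; rewrite /p in hi; lia.
rewrite [X in _ + X]big1_seq ?addr0 => [|i]; last first.
  by rewrite mem_iota => /andP[_ hi]; apply: f0; rewrite /p /N in hi; lia.
rewrite -{1}(add0n p) big_addn addKn big_mkord; apply: eq_bigr => i _.
by congr f; rewrite /p; lia.
Qed.

Lemma winsum_refl c L H f : L <= H ->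
  winsum L H f = winsum (c - H) (c - L) (fun j => f (c - j)).
Proof.
move=> LH.
rewrite /winsum (reindex_inj rev_ord_inj) /=.
have -> : absz (c - L - (c - H))%R = absz (H - L)%R by lia.
by apply: eq_bigr => i _; congr f; move: (ltn_ord i) => hi; lia.
Qed.

End WindowSum.

Lemma sum_triangle (V : nmodType) (k : nat) (F : nat -> nat -> V) :
  \sum_(i < k.+1) \sum_(j < i.+1) F j i =
  \sum_(j < k.+1) \sum_(l < (k - j).+1) F j (j + l)%N.
Proof.
elim: k => [|k IHk]; first by rewrite !big_ord1.
rewrite big_ord_recr /= IHk [RHS]big_ord_recr /= subnn big_ord1 addn0.
rewrite [\sum_(j < k.+2) _]big_ord_recr /= addrA; congr (_ + _).
rewrite -big_split /=; apply: eq_bigr => j _.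
have jk : (j <= k)%N by have := ltn_ord j.
rewrite subSn // [RHS]big_ord_recr /=; congr (_ + F _ _); lia.
Qed.

Section PowerSeries.
Variables (C : numClosedFieldType) (R : comAlgType C) (n : nat).
Implicit Types (f g h : pser R n) (A B : 'M[R]_n).

Lemma pmulA f g h : pmul (pmul f g) h = pmul f (pmul g h).
Proof.
apply: functional_extensionality => k; rewrite /pmul.
under eq_bigr do rewrite mulmx_suml.
rewrite (sum_triangle k (fun j i => f j *m g (i - j)%N *m h (k - i)%N)).
apply: eq_bigr => j _; rewrite mulmx_sumr; apply: eq_bigr => l _.
by rewrite mulmxA addKn subnDA.
Qed.

Lemma pmul_constl A f : pmul (pconst A) f = fun k => A *m f k.
Proof.
apply: functional_extensionality => k; rewrite /pmul big_ord_recl /= subn0.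
by rewrite big1 ?addr0 // => i _; rewrite mul0mx.
Qed.

Lemma pmul1l f : pmul (pone R n) f = f.
Proof.
by rewrite /pone pmul_constl; apply: functional_extensionality => k; rewrite mul1mx.
Qed.

Lemma pconstM A B : pmul (pconst A) (pconst B) = pconst (A *m B).
Proof.
rewrite pmul_constl; apply: functional_extensionality => k; rewrite /pconst.
by case: ifP; rewrite ?mulmx0.
Qed.

Definition pconj g ginv A := pmul (pmul g (pconst A)) ginv.

Lemma pconjM g ginv A B : pmul ginv g = pone R n ->
  pmul (pconj g ginv A) (pconj g ginv B) = pconj g ginv (A *m B).
Proof.
move=> ginvK; rewrite /pconj pmulA -(pmulA ginv) -(pmulA ginv) ginvK pmul1l.
by rewrite -pmulA (pmulA g) pconstM.
Qed.

Lemma embCM (A B : 'M[C]_n) : embC R (A *m B) = embC R A *m embC R B.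
Proof. exact: (map_mxM (in_alg R)). Qed.

Lemma winsum_cauchy f g (a b L H : int) : L <= a -> b <= H ->
  winsum L H (fun j => (if a <= j then f (absz (j - a)%R) else 0)
                       *m (if j <= b then g (absz (b - j)%R) else 0))
  = if a <= b then pmul f g (absz (b - a)%R) else 0.
Proof.
move=> La bH; case: ifP => ab; last first.
  apply: winsum_eq0 => j; case: ifP => aj; last by rewrite mul0mx.
  by rewrite ifF ?mulmx0 //; lia.
rewrite (@winsum_widen _ L H a b) // => [|j]; last first.
  by move=> jab; case: ifP => aj; [rewrite ifF ?mulmx0 //; lia | rewrite mul0mx].
apply: eq_bigr => i _; have := ltn_ord i => ib.
rewrite ifT; last by lia.
by rewrite ifT; [congr (f _ *m g _) | ]; lia.
Qed.

Lemma winsum_negser_mul f g (s t k L H : int) : L <= H -> L <= k - t -> s <= H ->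
  winsum L H (fun j => zshift s (negser f) j *m zshift t (negser g) (k - j))
  = zshift (s + t) (negser (pmul f g)) k.
Proof.
move=> LH Lk sH.
have -> : zshift (s + t) (negser (pmul f g)) k
          = if k - t <= s then pmul f g (absz (s - (k - t))%R) else 0.
  rewrite /zshift /negser; have -> : (k - (s + t) <= 0) = (k - t <= s) by lia.
  by case: ifP => // _; congr pmul; lia.
rewrite (winsum_refl (k - t + s)) //.
rewrite -(@winsum_cauchy f g (k - t) s (k - t + s - H) (k - t + s - L)); try lia.
apply: eq_winsum => j; rewrite /zshift /negser; congr (_ *m _).
  have -> : (k - t + s - j - s <= 0) = (k - t <= j) by lia.
  by case: ifP => // _; congr f; lia.
have -> : (k - (k - t + s - j) - t <= 0) = (j <= s) by lia.
by case: ifP => // _; congr g; lia.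
Qed.

Lemma winsum_zinvser_mul f g (s t k L H : int) : L <= s - 1 -> k - t + 1 <= H ->
  winsum L H (fun j => zshift s (zinvser f) j *m zshift t (zinvser g) (k - j))
  = zshift (s + t - 1) (zinvser (pmul f g)) k.
Proof.
move=> Ls kH.
have -> : zshift (s + t - 1) (zinvser (pmul f g)) k
          = if s - 1 <= k - t + 1 then pmul f g (absz (k - t + 1 - (s - 1))%R) else 0.
  rewrite /zshift /zinvser.
  have -> : (-1 <= k - (s + t - 1)) = (s - 1 <= k - t + 1) by lia.
  by case: ifP => // _; congr pmul; lia.
rewrite -(@winsum_cauchy f g (s - 1) (k - t + 1) L H) //.
apply: eq_winsum => j; rewrite /zshift /zinvser; congr (_ *m _).
  have -> : (-1 <= j - s) = (s - 1 <= j) by lia.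
  by case: ifP => // _; congr f; lia.
have -> : (-1 <= k - j - t) = (j <= k - t + 1) by lia.
by case: ifP => // _; congr g; lia.
Qed.

End PowerSeries.

Section Brackets.
Variables (C : numClosedFieldType) (R : comAlgType C) (n : nat).
Implicit Types (X Y P : lser R n) (f g : pser R n).

Definition lbr_term X Y (k j : int) : 'M[R]_n := X j *m Y (k - j) - Y (k - j) *m X j.

Lemma lbr_term_swap X Y (k j : int) : lbr_term X Y k (k - j) = - lbr_term Y X k j.
Proof. by rewrite /lbr_term subKr opprB. Qed.

Lemma lbrE (a b : int) P Y k : lbr a b P Y k = winsum a b (lbr_term P Y k).
Proof. by rewrite /lbr /lmulP /rmulP /winsum -sumrB. Qed.

Lemma lbr_winsum (a b L H : int) P Y k :
  vanishes_outside a b P -> a <= b -> L <= a -> b <= H ->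
  lbr a b P Y k = winsum L H (lbr_term P Y k).
Proof.
move=> P0 ab La bH; rewrite lbrE (winsum_widen ab La bH) // => j /P0 Pj.
by rewrite /lbr_term Pj mul0mx mulmx0 subrr.
Qed.

Lemma lbr_winsum_swap (a b L H : int) P Y k : vanishes_outside a b P -> a <= b ->
  L <= H -> k - H <= a -> b <= k - L ->
  lbr a b P Y k = - winsum L H (lbr_term Y P k).
Proof.
move=> P0 ab LH Ha bL; rewrite (lbr_winsum _ _ P0 ab Ha bL) (winsum_refl k) ?lerB //.
rewrite !subKr winsumN; apply: eq_winsum => j; exact: lbr_term_swap.
Qed.

Lemma zshift_lbr (a b m : int) P Y : zshift m (lbr a b P Y) = lbr a b P (zshift m Y).
Proof.
apply: functional_extensionality => k; rewrite /zshift /lbr /lmulP /rmulP.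
by congr (_ - _); apply: eq_bigr => j _; rewrite addrAC.
Qed.

Lemma winsum_lbr_termE X Y (L H k : int) : L <= H ->
  winsum L H (lbr_term X Y k) = winsum L H (fun j => X j *m Y (k - j))
                              - winsum (k - H) (k - L) (fun j => Y j *m X (k - j)).
Proof.
move=> LH; rewrite (@winsum_refl _ k (k - H)) ?lerB // !subKr winsumB.
by apply: eq_winsum => j; rewrite subKr.
Qed.

Lemma winsum_lbr_term_negser f g (s t k L H : int) : pmul f g = pmul g f ->
  L <= H -> L <= k - t -> s <= H ->
  winsum L H (lbr_term (zshift s (negser f)) (zshift t (negser g)) k) = 0.
Proof.
move=> fg LH Lk sH; rewrite winsum_lbr_termE // !winsum_negser_mul ?lerB //; try lia.
by rewrite fg [t + s]addrC subrr.
Qed.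

Lemma winsum_lbr_term_zinvser f g (s t k L H : int) : pmul f g = pmul g f ->
  L <= H -> L <= s - 1 -> k - t + 1 <= H ->
  winsum L H (lbr_term (zshift s (zinvser f)) (zshift t (zinvser g)) k) = 0.
Proof.
move=> fg LH Ls kH; rewrite winsum_lbr_termE // !winsum_zinvser_mul; try lia.
by rewrite fg [t + s]addrC subrr.
Qed.

Lemma lbr_term_lt0_ge0 X Y (k j : int) : 0 <= k ->
  lbr_term (pi_lt0 X) Y k j = lbr_term (pi_lt0 X) (pi_ge0 Y) k j.
Proof.
move=> k0; rewrite /lbr_term /pi_lt0 /pi_ge0 /=.
by case: ifP => j0; [rewrite ifT //; lia | rewrite !mul0mx !mulmx0].
Qed.

Lemma lbr_term_ge0_lt0 X Y (k j : int) : k < 0 ->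
  lbr_term (pi_ge0 X) Y k j = lbr_term (pi_ge0 X) (pi_lt0 Y) k j.
Proof.
move=> k0; rewrite /lbr_term /pi_lt0 /pi_ge0 /=.
by case: ifP => j0; [rewrite ifT //; lia | rewrite !mul0mx !mulmx0].
Qed.

Lemma lbr_term_ge0_eq0 X Y (k j : int) : k < 0 -> lbr_term (pi_ge0 X) (pi_ge0 Y) k j = 0.
Proof.
move=> k0; rewrite /lbr_term /pi_ge0 /=.
case: ifP => j0; last by rewrite !mul0mx !mulmx0 subrr.
by rewrite ifF ?mulmx0 ?mul0mx ?subrr //; lia.
Qed.

Lemma lbr_term_lt0_eq0 X Y (k j : int) : 0 <= k -> lbr_term (pi_lt0 X) (pi_lt0 Y) k j = 0.
Proof.
move=> k0; rewrite /lbr_term /pi_lt0 /=.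
case: ifP => j0; last by rewrite !mul0mx !mulmx0 subrr.
by rewrite ifF ?mulmx0 ?mul0mx ?subrr //; lia.
Qed.

Lemma lbr_term_split_ge0 X Y (k j : int) : 0 <= k ->
  lbr_term X Y k j = lbr_term (pi_ge0 X) Y k j + lbr_term X (pi_ge0 Y) k j
                   - lbr_term (pi_ge0 X) (pi_ge0 Y) k j.
Proof.
move=> k0; rewrite /lbr_term /pi_ge0 /=.
case: ifP => j0; first by rewrite addrK.
by rewrite ifT ?mul0mx ?mulmx0 ?subrr ?add0r ?subr0 //; lia.
Qed.

Lemma lbr_term_split_lt0 X Y (k j : int) : k < 0 ->
  lbr_term X Y k j = lbr_term (pi_lt0 X) Y k j + lbr_term X (pi_lt0 Y) k j
                   - lbr_term (pi_lt0 X) (pi_lt0 Y) k j.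
Proof.
move=> k0; rewrite /lbr_term /pi_lt0 /=.
case: ifP => j0; first by rewrite addrK.
by rewrite ifT ?mul0mx ?mulmx0 ?subrr ?add0r ?subr0 //; lia.
Qed.

Lemma Bop_vanishes (Uf : lser R n) (m : int) : (forall j, 0 < j -> Uf j = 0) ->
  vanishes_outside 0 m (Bop Uf m).
Proof.
move=> U0 j; rewrite /Bop /pi_ge0 /zshift; case: ifP => // j0 jm.
by apply: U0; lia.
Qed.

Lemma Cop_vanishes (Wf : lser R n) (m : int) : (forall j, j < -1 -> Wf j = 0) ->
  vanishes_outside m (-1) (Cop Wf m).
Proof.
move=> W0 j; rewrite /Cop /pi_lt0 /zshift; case: ifP => // j0 jm.
by apply: W0; lia.
Qed.

Lemma derivation0 (d : R -> R) : is_derivation d -> d 0 = 0.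
Proof.
case=> dD _ _; apply: (addrI (d 0)).
by rewrite -dD !addr0.
Qed.

Lemma dser_pi_ge0 (d : R -> R) X : is_derivation d ->
  dser d (pi_ge0 X) = pi_ge0 (dser d X).
Proof.
move=> dd; apply: functional_extensionality => k; rewrite /dser /pi_ge0.
by case: ifP => // _; apply/matrixP => i j; rewrite !mxE derivation0.
Qed.

Lemma dser_pi_lt0 (d : R -> R) X : is_derivation d ->
  dser d (pi_lt0 X) = pi_lt0 (dser d X).
Proof.
move=> dd; apply: functional_extensionality => k; rewrite /dser /pi_lt0.
by case: ifP => // _; apply/matrixP => i j; rewrite !mxE derivation0.
Qed.

Lemma dser_Bop (d : R -> R) X (m : int) : is_derivation d ->
  dser d (Bop X m) = pi_ge0 (zshift m (dser d X)).
Proof. exact: dser_pi_ge0. Qed.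

Lemma dser_Cop (d : R -> R) X (m : int) : is_derivation d ->
  dser d (Cop X m) = pi_lt0 (zshift (m + 1) (dser d X)).
Proof. exact: dser_pi_lt0. Qed.

End Brackets.

Section ZeroCurvature.
Variables (C : numClosedFieldType) (R : comAlgType C) (n r : nat).
Variables (D : int -> 'I_r -> R -> R) (U W : 'I_r -> lser R n) (F G : 'I_r -> pser R n).
Hypothesis D_der : forall m a, is_derivation (D m a).
Hypothesis U_def : forall a, U a = negser (F a).
Hypothesis W_def : forall b, W b = zinvser (G b).
Hypothesis F_comm : forall a b, pmul (F a) (F b) = pmul (F b) (F a).
Hypothesis G_comm : forall a b, pmul (G a) (G b) = pmul (G b) (G a).
Hypothesis hier : combined_solution D U W.

Lemma U_gt0_eq0 a (j : int) : 0 < j -> U a j = 0.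
Proof. by move=> j0; rewrite U_def /negser ifF //; lia. Qed.

Lemma W_ltN1_eq0 b (j : int) : j < -1 -> W b j = 0.
Proof. by move=> j0; rewrite W_def /zinvser ifF //; lia. Qed.

Lemma U_commute a1 a2 (s t k L H : int) : L <= H -> L <= k - t -> s <= H ->
  winsum L H (lbr_term (zshift s (U a1)) (zshift t (U a2)) k) = 0.
Proof. by rewrite !U_def; exact: winsum_lbr_term_negser. Qed.

Lemma W_commute b1 b2 (s t k L H : int) : L <= H -> L <= s - 1 -> k - t + 1 <= H ->
  winsum L H (lbr_term (zshift s (W b1)) (zshift t (W b2)) k) = 0.
Proof. by rewrite !W_def; exact: winsum_lbr_term_zinvser. Qed.

Lemma curvature_CB (m1 m2 : int) b1 a2 (k : int) : m1 < 0 -> 0 <= m2 ->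
  dser (D m1 b1) (Bop (U a2) m2) k - dser (D m2 a2) (Cop (W b1) m1) k
  - lbr m1 (-1) (Cop (W b1) m1) (Bop (U a2) m2) k = 0.
Proof.
move=> m1_lt0 m2_ge0; have [hierB hierC] := hier.
rewrite dser_Bop // dser_Cop // (hierC m1 b1 b1 a2 m1_lt0).2 (hierB m2 a2 a2 b1 m2_ge0).2.
rewrite !zshift_lbr /pi_ge0 /pi_lt0.
have [k_ge0 | k_lt0] := leP 0 k.
  rewrite subr0 !lbrE winsumB; apply: winsum_eq0 => j.
  by rewrite lbr_term_lt0_ge0 // subrr.
set K := `|k| + `|m1| + `|m2| + 1.
rewrite (lbr_winsum (L := - K) (H := K) _ _ (Bop_vanishes (U_gt0_eq0 a2))); try lia.
rewrite (lbr_winsum_swap (L := - K) (H := K) _ (Cop_vanishes (W_ltN1_eq0 b1))); try lia.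
rewrite sub0r opprK (eq_winsum _ _ (fun j => lbr_term_ge0_lt0 _ _ j k_lt0)).
exact: addNr.
Qed.

Lemma curvature_BB (m1 m2 : int) a1 a2 (k : int) : 0 <= m1 -> 0 <= m2 ->
  dser (D m1 a1) (Bop (U a2) m2) k - dser (D m2 a2) (Bop (U a1) m1) k
  - lbr 0 m1 (Bop (U a1) m1) (Bop (U a2) m2) k = 0.
Proof.
move=> m1_ge0 m2_ge0; have [hierB _] := hier.
rewrite !dser_Bop // (hierB m1 a1 a2 a2 m1_ge0).1 (hierB m2 a2 a1 a1 m2_ge0).1.
rewrite !zshift_lbr /pi_ge0.
have [k_ge0 | k_lt0] := leP 0 k; last first.
  rewrite subrr sub0r lbrE winsumN; apply: winsum_eq0 => j.
  by rewrite lbr_term_ge0_eq0 // oppr0.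
set K := `|k| + `|m1| + `|m2| + 1.
rewrite !(lbr_winsum (L := - K) (H := K) _ _ (Bop_vanishes (U_gt0_eq0 a1))); try lia.
rewrite (lbr_winsum_swap (L := - K) (H := K) _ (Bop_vanishes (U_gt0_eq0 a2))); try lia.
rewrite -(@U_commute a1 a2 m1 m2 k (- K) K); try lia.
rewrite opprK winsumD winsumB; apply: eq_winsum => j.
by rewrite [RHS](lbr_term_split_ge0 _ _ j k_ge0).
Qed.

Lemma curvature_CC (m1 m2 : int) b1 b2 (k : int) : m1 < 0 -> m2 < 0 ->
  dser (D m1 b1) (Cop (W b2) m2) k - dser (D m2 b2) (Cop (W b1) m1) k
  - lbr m1 (-1) (Cop (W b1) m1) (Cop (W b2) m2) k = 0.
Proof.
move=> m1_lt0 m2_lt0; have [_ hierC] := hier.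
rewrite !dser_Cop // (hierC m1 b1 b2 b2 m1_lt0).1 (hierC m2 b2 b1 b1 m2_lt0).1.
rewrite !zshift_lbr /pi_lt0.
have [k_ge0 | k_lt0] := leP 0 k.
  rewrite subrr sub0r lbrE winsumN; apply: winsum_eq0 => j.
  by rewrite lbr_term_lt0_eq0 // oppr0.
set K := `|k| + `|m1| + `|m2| + 1.
rewrite !(lbr_winsum (L := - K) (H := K) _ _ (Cop_vanishes (W_ltN1_eq0 b1))); try lia.
rewrite (lbr_winsum_swap (L := - K) (H := K) _ (Cop_vanishes (W_ltN1_eq0 b2))); try lia.
rewrite -(@W_commute b1 b2 (m1 + 1) (m2 + 1) k (- K) K); try lia.
rewrite opprK winsumD winsumB; apply: eq_winsum => j.
by rewrite [RHS](lbr_term_split_lt0 _ _ j k_lt0).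
Qed.

End ZeroCurvature.

Unset Implicit Arguments.

Theorem proposition3p1 (C : numClosedFieldType) (R : comAlgType C) (n r : nat)
    (E : 'I_r -> 'M[C]_n) (D : int -> 'I_r -> R -> R)
    (U W : 'I_r -> lser R n) :
  is_t_basis E -> derivation_family D -> deformation E U W ->
  combined_solution D U W ->
  [/\ (forall (m1 m2 : int) (b1 a2 : 'I_r), m1 < 0 -> 0 <= m2 -> forall k,
         dser (D m1 b1) (Bop (U a2) m2) k - dser (D m2 a2) (Cop (W b1) m1) k
         - lbr m1 (-1) (Cop (W b1) m1) (Bop (U a2) m2) k = 0),
      (forall (m1 m2 : int) (a1 a2 : 'I_r), 0 <= m1 -> 0 <= m2 -> forall k,
         dser (D m1 a1) (Bop (U a2) m2) k - dser (D m2 a2) (Bop (U a1) m1) k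
         - lbr 0 m1 (Bop (U a1) m1) (Bop (U a2) m2) k = 0)
    & (forall (m1 m2 : int) (b1 b2 : 'I_r), m1 < 0 -> m2 < 0 -> forall k,
         dser (D m1 b1) (Cop (W b2) m2) k - dser (D m2 b2) (Cop (W b1) m1) k
         - lbr m1 (-1) (Cop (W b1) m1) (Cop (W b2) m2) k = 0)].
Proof.
move=> [_ E_comm _ _] [D_der _] [[g [ginv [_ _ ginvK U_def]]] [X [Xinv [_ _ XinvK W_def]]]].
move=> hier.
have conj_comm h hinv : pmul hinv h = pone R n -> forall a b,
    pmul (pconj h hinv (embC R (E a))) (pconj h hinv (embC R (E b)))
    = pmul (pconj h hinv (embC R (E b))) (pconj h hinv (embC R (E a))).
  by move=> hK a b; rewrite !pconjM // -!embCM E_comm.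
split=> m1 m2 i1 i2 h1 h2 k.
- exact: (curvature_CB D_der U_def W_def hier).
- exact: (curvature_BB D_der U_def (conj_comm _ _ ginvK) hier).
- exact: (curvature_CC D_der W_def (conj_comm _ _ XinvK) hier).
Qed.
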